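(* Let $A$ be the upper triangular $N\times N$ complex matrix with entries $A_{ii}=\lambda_i(\lambda_i-1)$, $A_{ij}=-2\lambda_i$ for $i<j$, and $A_{ij}=0$ for $i>j$. Then for every $m\geq0$ and every $i\in\{1,\dots,N\}$, $$C^{(2m+1)}_{ii}\cdot v=\Big(\sum_{j=1}^N (A^m)_{ij}\,\lambda_j\Big)\, v.$$
   Context: Let $N\geq1$, $I=\{-N,\dots,-1,1,\dots,N\}$, and for $k\in I$ put $\bar k=0$ if $k>0$, $\bar k=1$ if $k<0$. The Lie superalgebra $\mathfrak{q}(N)$ over $\mathbb{C}$ is spanned by elements $F_{ij}$ ($i,j\in I$) with $F_{-i,-j}=F_{ij}$ (realized as $F_{ij}=E_{ij}+E_{-i,-j}\in\mathfrak{gl}(N|N)$), $F_{ij}$ of parity $\bar\imath+\bar\jmath\bmod 2$, and supercommutator $$[F_{ij}, F_{kl}] = \delta_{kj} F_{il} - (-1)^{(\bar{\imath}+ \bar{\jmath})(\bar{k} + \bar{l})} \delta_{il} F_{kj} + \delta_{k,-j} F_{-i,l} - (-1)^{(\bar{\imath} + \bar{\jmath})(\bar{k} + \bar{l})} \delta_{-i,l} F_{k,-j}.$$ For $n\geq1$ define $C^{(n)}_{ij}\in U(\mathfrak{q}(N))$ by $$C^{(n)}_{ij} = \sum_{k_1,\ldots,k_{n-1}\in I}F_{ik_1} (-1)^{\bar{k}_1} F_{k_1k_2} (-1)^{\bar{k}_2} \cdots F_{k_{n-2}k_{n-1}} (-1)^{\bar{k}_{n-1}} F_{k_{n-1}j}$$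 (so $C^{(1)}_{ij}=F_{ij}$). Let $V$ be a representation of $\mathfrak{q}(N)$ and $v\in V$ a vector such that $F_{ij}\cdot v=0$ whenever $|i|<|j|$, and $F_{ii}\cdot v=\lambda_i v$ for $i=1,\dots,N$, where $\lambda_1,\dots,\lambda_N\in\mathbb{C}$. *)

From HB Require Import structures.
From mathcomp Require Import all_boot all_order all_algebra all_field.
Set Implicit Arguments. Unset Strict Implicit. Unset Printing Implicit Defensive.
Import Order.TTheory GRing.Theory Num.Theory.
Local Open Scope ring_scope.

Definition idxI (N : nat) : seq int :=
  [seq - (Posz k.+1) | k <- iota 0 N] ++ [seq Posz k.+1 | k <- iota 0 N].

Definition par (k : int) : nat := (k < 0)%R.

Definition ssign (i j k l : int) : algC :=
  (-1) ^+ ((par i + par j) * (par k + par l))%N.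

(* An (ungraded) module structure for q(N): operators rho i j acting for
   F_{ij}, linear, with F_{-i,-j} = F_{ij}, satisfying the supercommutator
   relations (i.e. a module over U(q(N))). *)
Definition is_qN_rep (N : nat) (V : lmodType algC) (rho : int -> int -> V -> V) : Prop :=
  [/\ (forall i j (a : algC) (u w : V), rho i j (a *: u + w) = a *: rho i j u + rho i j w),
      (forall i j, i \in idxI N -> j \in idxI N -> rho (- i) (- j) = rho i j) &
      (forall i j k l (u : V), i \in idxI N -> j \in idxI N -> k \in idxI N -> l \in idxI N ->
         rho i j (rho k l u) - ssign i j k l *: rho k l (rho i j u) =
           (if k == j then rho i l u else 0)
         - ssign i j k l *: (if i == l then rho k j u else 0)
         + (if k == - j then rho (- i) l u else 0)
         - ssign i j k l *: (if - i == l then rho k (- j) u else 0))].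

(* Cop n i j = action of C^{(n+1)}_{ij}:
   C^{(n+2)}_{ij} = sum_k F_{ik} (-1)^{\bar k} C^{(n+1)}_{kj}. *)
Fixpoint Cop (N : nat) (V : lmodType algC) (rho : int -> int -> V -> V) (n : nat)
    (i j : int) (u : V) : V :=
  match n with
  | 0 => rho i j u
  | n'.+1 => \sum_(k <- idxI N) rho i k ((-1) ^+ par k *: Cop N rho n' k j u)
  end.

(* Action of C^{(n)}_{ij} for n >= 1 (C^{(0)} is not used). *)
Definition Cact (N : nat) (V : lmodType algC) (rho : int -> int -> V -> V) (n : nat)
    (i j : int) (u : V) : V :=
  if n is n'.+1 then Cop N rho n' i j u else u.

Definition Amx (N : nat) (lam : 'I_N -> algC) : 'M[algC]_N :=
  \matrix_(i < N, j < N)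
    (if i == j then lam i * (lam i - 1)
     else if (i < j)%N then - (2 * lam i) else 0).

(* Cop n i j (from Defs) is the action of C^(n+1)_ij, and eps k = (-1)^(bar k).
   1. Index set and signs: sums over I = {+-1, ..., +-N}, the parity of -k, and
      the identities satisfied by the supersign ssign.
   2. Any representation: the operators C^(n+1)_ij are linear, the recursion
      defining them also unfolds on the right, C^(n+1)_{-i,-j} = (-1)^n C^(n+1)_ij,
      and they transform under F_ij exactly like the F_kl (Cop_bracket: the
      supercommutator [F_ij, C_kl] has the right-hand side of [F_ij, F_kl];
      induction on n).
   3. A highest weight vector v: C^(n+1)_ij v = 0 for |i| < |j| (Cop_hw), and
      the commutator relation turns the sums defining C^(n+2)_aa v and
      C^(n+2)_{a,-a} v into a recursion in the C^(n+1)_bb v, C^(n+1)_{b,-b} v,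
      b >= a (Cop_diag_step, Cop_anti_step).  Alternating the even and odd
      steps gives C^(2m+1)_aa v = lam_a c_m(a) v for explicit scalars c_m
      (hwcoef), and sum_Amx_exp identifies lam_i c_m(i) with (A^m lam)_i. *)

From Pilot Require Import Defs.
From HB Require Import structures.
From mathcomp Require Import all_boot all_order all_algebra all_field.
From mathcomp Require Import ring.
Set Implicit Arguments. Unset Strict Implicit. Unset Printing Implicit Defensive.
Import Order.TTheory GRing.Theory Num.Theory.
Local Open Scope ring_scope.

Section IndexSet.
Variable N : nat.
Local Notation I := (idxI N).

Lemma mem_idxI_pos (b : nat) : (Posz b.+1 \in I) = (b < N)%N.
Proof.
rewrite /idxI mem_cat mem_map ?mem_iota; last by move=> x y [].
by case: mapP => // -[].
Qed.

Lemma mem_idxI_neg (b : nat) : (- Posz b.+1 \in I) = (b < N)%N.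
Proof.
rewrite /idxI mem_cat (mem_map (f := fun k : nat => - Posz k.+1)) ?mem_iota.
  by case: mapP => [[]|]; rewrite ?orbF.
by move=> x y /= [->].
Qed.

Lemma idxIP k : k \in I -> exists2 b, (b < N)%N & k = Posz b.+1 \/ k = - Posz b.+1.
Proof.
by rewrite mem_cat => /orP [] /mapP [b]; rewrite mem_iota => hb ->; exists b; auto.
Qed.

Lemma mem_idxIN k : (- k \in I) = (k \in I).
Proof.
have opp_mem j : j \in I -> - j \in I.
  by case/idxIP => b hb [] ->; rewrite ?opprK ?mem_idxI_pos ?mem_idxI_neg.
by apply/idP/idP => /opp_mem; rewrite ?opprK.
Qed.

Lemma idxI_uniq : uniq I.
Proof.
rewrite cat_uniq !map_inj_uniq ?iota_uniq //=; last 2 first.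
- by move=> x y /= [->].
- by move=> x y [].
by rewrite andbT; apply/hasPn => _ /mapP [y _ ->]; apply/mapP => -[].
Qed.

Lemma opp_idxI_neq k : k \in I -> (- k == k) = false.
Proof. by case/idxIP => b _ [] ->; rewrite ?opprK. Qed.

Lemma par_opp k : k \in I -> par (- k) = (1 - par k)%N.
Proof. by case/idxIP => b _ [] ->; rewrite ?opprK. Qed.

Lemma big_idxI_pair (W : nmodType) (g : int -> W) :
  \sum_(k <- I) g k = \sum_(b < N) (g (Posz b.+1) + g (- Posz b.+1)).
Proof.
rewrite big_split /= -(big_mkord xpredT (fun b => g (Posz b.+1))).
rewrite -(big_mkord xpredT (fun b => g (- Posz b.+1))) big_cat !big_map.
by rewrite /index_iota subn0 addrC.
Qed.

Lemma big_idxI_opp (W : nmodType) (g : int -> W) :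
  \sum_(k <- I) g k = \sum_(k <- I) g (- k).
Proof. by rewrite !big_idxI_pair; apply: eq_bigr => b _; rewrite opprK addrC. Qed.

Lemma big_idxI_delta (W : nmodType) (i : int) (g : int -> W) : i \in I ->
  \sum_(k <- I) (if k == i then g k else 0) = g i.
Proof.
move=> hi; rewrite (bigD1_seq i) ?idxI_uniq //= eqxx big1 ?addr0 //.
by move=> k /negbTE ->.
Qed.

End IndexSet.

(* Elementary consequences of linearity, for an operator [f] known only
   through the hypothesis [linear f]. *)
Section LinearOperator.
Variables (V : lmodType algC) (f : V -> V).
Hypothesis f_lin : linear f.

Lemma linopB u w : f (u - w) = f u - f w.
Proof. exact: zmod_morphism_linear f_lin u w. Qed.

Lemma linop0 : f 0 = 0.
Proof. by have := linopB 0 0; rewrite subrr => ->; rewrite subrr. Qed.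

Lemma linopN u : f (- u) = - f u.
Proof. by rewrite -sub0r linopB linop0 sub0r. Qed.

Lemma linopD u w : f (u + w) = f u + f w.
Proof. by rewrite -{1}[w]opprK linopB linopN opprK. Qed.

Lemma linopZ a u : f (a *: u) = a *: f u.
Proof. exact: scalable_linear f_lin a u. Qed.

Lemma linop_sum (J : Type) (r : seq J) (F : J -> V) :
  f (\sum_(x <- r) F x) = \sum_(x <- r) f (F x).
Proof. exact: (big_morph f linopD linop0). Qed.

Lemma linop_if (b : bool) u : f (if b then u else 0) = if b then f u else 0.
Proof. by case: b; rewrite ?linop0. Qed.

End LinearOperator.

Lemma signr_par_opp N k : k \in idxI N -> (-1) ^+ par (- k) = - (-1) ^+ par k :> algC.
Proof. by move/par_opp ->; rewrite /par; case: (k < 0); rewrite ?expr0 ?expr1 ?opprK. Qed.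

Lemma signr_odd_eq (m n : nat) : odd m = odd n -> (-1) ^+ m = (-1) ^+ n :> algC.
Proof. by move=> e; rewrite -signr_odd e signr_odd. Qed.

Lemma ssign_trans i j k p l : ssign i j k p * ssign i j p l = ssign i j k l.
Proof.
rewrite /ssign -exprD; apply: signr_odd_eq; rewrite /par.
by case: (i < 0); case: (j < 0); case: (k < 0); case: (p < 0); case: (l < 0).
Qed.

Lemma ssign_sq i j k l : ssign i j k l * ssign i j k l = 1.
Proof. by rewrite /ssign -exprD addnn -signr_odd odd_double. Qed.

(* The two sign identities that make the commutator terms cancel. *)
Lemma ssign_par i j k :
  (-1) ^+ par i * ssign i j k i = (-1) ^+ par j * ssign i j k j.
Proof.
rewrite /ssign -!exprD; apply: signr_odd_eq; rewrite /par.
by case: (i < 0); case: (j < 0); case: (k < 0).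
Qed.

Lemma ssign_par_opp N i j k : i \in idxI N -> j \in idxI N ->
  (-1) ^+ par (- i) * ssign i j k (- i) = (-1) ^+ par (- j) * ssign i j k (- j).
Proof.
move=> hi hj; rewrite /ssign (par_opp hi) (par_opp hj) -!exprD.
apply: signr_odd_eq; rewrite /par.
by case: (i < 0); case: (j < 0); case: (k < 0).
Qed.

(* Right-hand side of the supercommutator [F_ij, F_kl] in q(N), written for
   an arbitrary family of operators X in place of F. *)
Definition qbracket (V : lmodType algC) (X : int -> int -> V -> V) (i j k l : int)
    (u : V) : V :=
  (if k == j then X i l u else 0)
  - ssign i j k l *: (if i == l then X k j u else 0)
  + (if k == - j then X (- i) l u else 0)
  - ssign i j k l *: (if - i == l then X k (- j) u else 0).

Lemma qbracket_outer N (V : lmodType algC) (X : int -> int -> V -> V) i j k u :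
  k \in idxI N ->
  qbracket X k j i k u = (if i == j then X k k u else 0)
    - ssign k j i k *: X i j u + (if i == - j then X (- k) k u else 0).
Proof. by move=> hk; rewrite /qbracket eqxx (opp_idxI_neq hk) scaler0 subr0. Qed.

Lemma big_ord_from (W : nmodType) N (a : 'I_N) (g : 'I_N -> W) :
  (forall b : 'I_N, (b < a)%N -> g b = 0) ->
  \sum_(b < N) g b = g a + \sum_(b < N | (a < b)%N) g b.
Proof.
move=> g0; rewrite (bigD1 a) //; congr (_ + _).
rewrite big_mkcond [RHS]big_mkcond; apply: eq_bigr => b _.
case: (ltngtP a b) => [ab | ba | /val_inj ->]; rewrite ?eqxx //.
- by rewrite (_ : b != a) //; apply: contraTneq ab => ->; rewrite ltnn.
- by rewrite g0 //; case: (b != a).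
Qed.

Lemma par_pos (a : nat) : par (Posz a.+1) = 0%N. Proof. by []. Qed.
Lemma par_neg (a : nat) : par (- Posz a.+1) = 1%N. Proof. by []. Qed.

Lemma ssign_outer_pos k (a b : nat) : ssign k (Posz a.+1) (Posz b.+1) k = (-1) ^+ par k.
Proof.
by rewrite /ssign !par_pos; apply: signr_odd_eq; rewrite /par; case: (k < 0).
Qed.

Lemma ssign_outer_neg k (a b : nat) : ssign k (- Posz a.+1) (Posz b.+1) k = 1.
Proof.
rewrite /ssign par_pos par_neg -(expr0 (-1 : algC)); apply: signr_odd_eq.
by rewrite /par; case: (k < 0).
Qed.

Lemma eq_pos_neg (a b : nat) : (Posz a.+1 == - Posz b.+1) = false.
Proof. by []. Qed.

(* The scalars c_m(a) of the theorem, C^(2m+1)_aa v = lam_a c_m(a) v: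
   c_0 = 1 and c_(m+1)(a) = lam_a (lam_a - 1) c_m(a) - 2 sum_(b > a) lam_b c_m(b). *)
Fixpoint hwcoef N (lam : 'I_N -> algC) (m : nat) (a : 'I_N) : algC :=
  if m is m'.+1 then
    lam a * (lam a - 1) * hwcoef lam m' a
    - 2 * \sum_(b < N | (a < b)%N) lam b * hwcoef lam m' b
  else 1.

(* The recursion of c_m is the matrix A acting on the vector (lam_b c_m(b))_b,
   hence (A^m lam)_i = lam_i c_m(i). *)
Lemma sum_Amx_exp N (lam : 'I_N -> algC) m (i : 'I_N) :
  \sum_(j < N) ((Amx lam) ^+ m) i j * lam j = lam i * hwcoef lam m i.
Proof.
elim: m i => [|m IH] i.
  rewrite expr0 mulr1 (bigD1 i) //= big1 ?addr0 => [|j ji]; first by rewrite mxE eqxx mul1r.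
  by rewrite mxE eq_sym (negbTE ji) mul0r.
rewrite exprS.
under eq_bigr => j _ do rewrite -mulmxE mxE mulr_suml.
rewrite exchange_big /=.
under eq_bigr => k _ do under eq_bigr => j _ do rewrite -mulrA.
under eq_bigr => k _ do rewrite -mulr_sumr IH.
rewrite (bigD1 i) //= [Amx lam i i]mxE eqxx /= big_mkcond /=.
rewrite (eq_bigr (fun k : 'I_N =>
  if (i < k)%N then - (2 * lam i) * (lam k * hwcoef lam m k) else 0)).
  by rewrite -big_mkcond -mulr_sumr /=; ring.
move=> k _; rewrite mxE eq_sym; case: (eqVneq i k) => [<-|ne]; first by rewrite ltnn.
by case: (i < k)%N; rewrite ?mul0r.
Qed.

Section Representation.
Variables (N : nat) (V : lmodType algC) (rho : int -> int -> V -> V).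
Hypothesis rep : is_qN_rep N rho.
Local Notation I := (idxI N).
Local Notation C := (Cop N rho).
Local Notation eps k := ((-1) ^+ par k : algC).

Lemma rho_linear i j : linear (rho i j).
Proof. by case: rep => h _ _ a u w; apply: h. Qed.

Lemma rho_opp i j : i \in I -> j \in I -> rho (- i) (- j) = rho i j.
Proof. by case: rep => _ h _; apply: h. Qed.

Lemma rho_bracket i j k l u : i \in I -> j \in I -> k \in I -> l \in I ->
  rho i j (rho k l u) = ssign i j k l *: rho k l (rho i j u) + qbracket rho i j k l u.
Proof.
case: rep => _ _ h hi hj hk hl.
by move: (h i j k l u hi hj hk hl) => /eqP; rewrite subr_eq addrC => /eqP.
Qed.

Lemma CopS n i j u :
  C n.+1 i j u = \sum_(k <- I) rho i k (eps k *: C n k j u).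
Proof. by []. Qed.

Lemma Cop_linear n i j : linear (C n i j).
Proof.
elim: n i j => [|n IH] i j; first exact: rho_linear.
move=> a u w; rewrite !CopS scaler_sumr -big_split; apply: eq_bigr => k _.
by rewrite IH scalerDr scalerA mulrC -scalerA rho_linear.
Qed.

Lemma Cop_right n i j u :
  C n.+1 i j u = \sum_(k <- I) C n i k (eps k *: rho k j u).
Proof.
elim: n i j u => [|n IH] i j u; first by [].
rewrite CopS; under eq_bigr => p _ do rewrite IH scaler_sumr (linop_sum (rho_linear _ _)).
by rewrite exchange_big; apply: eq_bigr => k _; rewrite CopS.
Qed.

Lemma Cop_opp n i j u : i \in I -> j \in I ->
  C n (- i) (- j) u = (-1) ^+ n *: C n i j u.
Proof.
elim: n i j u => [|n IH] i j u hi hj; first by rewrite /= rho_opp // scale1r.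
rewrite !CopS (big_idxI_opp _ (fun k => rho (- i) k _)) scaler_sumr.
apply: eq_big_seq => p hp; rewrite rho_opp // IH // (signr_par_opp hp).
rewrite !(linopZ (rho_linear _ _)) !scalerA exprS; congr (_ *: _); ring.
Qed.

Lemma Cop_opp_swap n i u : i \in I -> C n (- i) i u = (-1) ^+ n *: C n i (- i) u.
Proof. by move=> hi; rewrite -{2}(opprK i) Cop_opp ?mem_idxIN. Qed.

(* Summing the relations for [F_ij, F_kp] against (-1)^p x_p over p. *)
Lemma sum_qbracket_rho i j k (x : int -> V) : i \in I -> j \in I ->
  \sum_(p <- I) qbracket rho i j k p (eps p *: x p) =
    (if k == j then \sum_(p <- I) rho i p (eps p *: x p) else 0)
  - (ssign i j k i * eps i) *: rho k j (x i)
  + (if k == - j then \sum_(p <- I) rho (- i) p (eps p *: x p) else 0)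
  - (ssign i j k (- i) * eps (- i)) *: rho k (- j) (x (- i)).
Proof.
move=> hi hj; have hNi : - i \in I by rewrite mem_idxIN.
have delta i' j' : i' \in I ->
    \sum_(p <- I) ssign i j k p *: (if i' == p then rho k j' (eps p *: x p) else 0)
    = (ssign i j k i' * eps i') *: rho k j' (x i').
  move=> hi'; rewrite -scalerA -(linopZ (rho_linear _ _)).
  rewrite -(big_idxI_delta (fun p => ssign i j k p *: rho k j' (eps p *: x p)) hi').
  by apply: eq_bigr => p _; rewrite eq_sym; case: eqP; rewrite ?scaler0.
rewrite /qbracket sumrB big_split sumrB !delta //.
by congr (_ - _ + _ - _); [case: (k == j) | case: (k == - j)]; rewrite // big1.
Qed.

(* Summing the induction hypothesis [F_ij, C_pl] against F_kp (-1)^p over p. *)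
Lemma sum_qbracket_Cop n i j k l u : i \in I -> j \in I ->
  \sum_(p <- I) ssign i j k p *: rho k p (eps p *: qbracket (C n) i j p l u) =
    (ssign i j k j * eps j) *: rho k j (C n i l u)
  - ssign i j k l *: (if i == l then C n.+1 k j u else 0)
  + (ssign i j k (- j) * eps (- j)) *: rho k (- j) (C n (- i) l u)
  - ssign i j k l *: (if - i == l then C n.+1 k (- j) u else 0).
Proof.
move=> hi hj; have hNj : - j \in I by rewrite mem_idxIN.
pose T p x := ssign i j k p *: rho k p (eps p *: x).
have T_lin p : linear (T p).
  move=> a x y; rewrite /T scalerDr scalerA mulrC -scalerA rho_linear.
  by rewrite scalerDr !scalerA mulrC.
have delta j' x : j' \in I ->
    \sum_(p <- I) T p (if p == j' then x else 0) = (ssign i j k j' * eps j') *: rho k j' x.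
  move=> hj'; rewrite -(big_idxI_delta (fun p => (ssign i j k p * eps p) *: rho k p x) hj').
  apply: eq_bigr => p _; rewrite (linop_if (T_lin p)) /T.
  by rewrite (linopZ (rho_linear _ _)) scalerA.
have fold j' (b : bool) :
    \sum_(p <- I) T p (ssign i j p l *: (if b then C n p j' u else 0))
    = ssign i j k l *: (if b then C n.+1 k j' u else 0).
  case: b; last by rewrite scaler0 big1 // => p _; rewrite scaler0 (linop0 (T_lin p)).
  rewrite CopS scaler_sumr; apply: eq_bigr => p _; rewrite /T.
  rewrite !(linopZ (rho_linear _ _)) !scalerA -(ssign_trans i j k p l).
  by congr (_ *: _); ring.
rewrite (eq_bigr (fun p => T p (qbracket (C n) i j p l u))) // /qbracket.
under eq_bigr do rewrite !(linopD (T_lin _), linopN (T_lin _)).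
by rewrite !(big_split, sumrN) /= !delta // !fold.
Qed.

Lemma addr_cancel_pairs (W : zmodType) (s a b c d x y : W) :
  s + (b - x + d - y) + (a - b + c - d) = s + (a - x + c - y).
Proof.
have e p q r t : p - q + r - t = (p + r) - (q + t) :> W.
  by rewrite [p - q + r]addrAC opprD addrA.
by rewrite !e -addrA; congr (_ + _); rewrite addrC addrA subrK.
Qed.

(* The operators C^(n+1)_kl transform under F_ij exactly like F_kl:
   [F_ij, C^(n+1)_kl] has the same right-hand side as [F_ij, F_kl]. *)
Lemma Cop_bracket n i j k l u : i \in I -> j \in I -> k \in I -> l \in I ->
  rho i j (C n k l u) = ssign i j k l *: C n k l (rho i j u) + qbracket (C n) i j k l u.
Proof.
elim: n i j k l u => [|n IH] i j k l u hi hj hk hl; first exact: rho_bracket.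
rewrite CopS (linop_sum (rho_linear i j)).
under eq_big_seq => p hp do
  rewrite (rho_bracket _ hi hj hk hp) (linopZ (rho_linear i j))
          (IH _ _ _ _ _ hi hj hp hl) scalerDr (linopD (rho_linear k p)) scalerDr.
rewrite big_split sum_qbracket_rho // big_split sum_qbracket_Cop // -!CopS.
have -> : \sum_(p <- I) ssign i j k p *: rho k p
            (eps p *: (ssign i j p l *: C n p l (rho i j u)))
          = ssign i j k l *: C n.+1 k l (rho i j u).
  rewrite CopS scaler_sumr; apply: eq_bigr => p _.
  rewrite !(linopZ (rho_linear _ _)) !scalerA -(ssign_trans i j k p l).
  by congr (_ *: _); ring.
rewrite [ssign i j k i * _]mulrC ssign_par [_ * ssign i j k j]mulrC.
rewrite [ssign i j k (- i) * _]mulrC (ssign_par_opp _ hi hj).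
rewrite [_ * ssign i j k (- j)]mulrC.
exact: addr_cancel_pairs.
Qed.

Section HighestWeightVector.
Variable v : V.
Hypothesis v_hw :
  forall i j, i \in I -> j \in I -> (absz i < absz j)%N -> rho i j v = 0.

Lemma Cop_rho_swap n i j k : i \in I -> j \in I -> k \in I ->
  C n i k v = 0 -> C n i k (rho k j v) = - (ssign k j i k *: qbracket (C n) k j i k v).
Proof.
move=> hi hj hk Cv0; have := Cop_bracket n v hk hj hi hk.
rewrite Cv0 (linop0 (rho_linear _ _)) => /eqP; rewrite eq_sym addr_eq0 => /eqP.
by move/(congr1 (fun w => ssign k j i k *: w)); rewrite scalerA ssign_sq scale1r scalerN.
Qed.

Lemma Cop_hw n i j : i \in I -> j \in I -> (absz i < absz j)%N -> C n i j v = 0.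
Proof.
elim: n i j => [|n IH] i j hi hj hij; first exact: v_hw.
rewrite Cop_right big_seq big1 // => k hk; rewrite (linopZ (Cop_linear _ _ _)).
have [kj | jk] := ltnP (absz k) (absz j).
  by rewrite v_hw // (linop0 (Cop_linear _ _ _)) scaler0.
have ik : (absz i < absz k)%N by apply: leq_trans jk.
rewrite Cop_rho_swap ?IH // (qbracket_outer _ _ _ _ hk) (IH i j) //.
have -> : (i == j) = false by apply: contraTF hij => /eqP ->; rewrite ltnn.
have -> : (i == - j) = false by apply: contraTF hij => /eqP ->; rewrite abszN ltnn.
by rewrite !(scaler0, oppr0, subr0, addr0, sub0r).
Qed.

Variable lam : 'I_N -> algC.
Hypothesis v_wt : forall a : 'I_N, rho (Posz a.+1) (Posz a.+1) v = lam a *: v.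
Local Notation pos a := (Posz (nat_of_ord a).+1).
Local Notation neg a := (- Posz (nat_of_ord a).+1).

(* F_{a,-a} is odd and F_{-a,a} = F_{a,-a}, so [F_{-a,a}, F_{a,-a}] = 2 F_aa
   gives F_{-a,a} F_{a,-a} v = lam_a v. *)
Lemma rho_neg_pos (a : 'I_N) : rho (neg a) (pos a) (rho (pos a) (neg a) v) = lam a *: v.
Proof.
have ha : pos a \in I by rewrite mem_idxI_pos.
have hna : neg a \in I by rewrite mem_idxI_neg.
have R_sym : rho (pos a) (neg a) = rho (neg a) (pos a).
  by rewrite -(rho_opp ha hna).
have := rho_bracket v hna ha ha hna.
rewrite (qbracket_outer _ _ _ _ hna) eqxx eq_pos_neg rho_opp // R_sym v_wt.
rewrite ssign_outer_pos par_neg expr1 !scaleN1r opprK addr0 => twice.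
apply: (@scalerI _ _ 2%:R); first by rewrite pnatr_eq0.
by rewrite !scaler_nat !mulr2n {1}twice addrC addNKr.
Qed.

Lemma Cop_diag_step n (a : 'I_N) :
  C n.+1 (pos a) (pos a) v =
    lam a *: C n (pos a) (pos a) v + rho (neg a) (pos a) (C n (pos a) (neg a) v)
    - (1 + (-1) ^+ n) *: (C n (pos a) (pos a) v
                         + \sum_(b < N | (a < b)%N) C n (pos b) (pos b) v).
Proof.
have ha : pos a \in I by rewrite mem_idxI_pos.
have hna : neg a \in I by rewrite mem_idxI_neg.
have lC i j := Cop_linear n i j.
have swap k : k \in I -> (a.+1 < absz k)%N ->
    C n (pos a) k (rho k (pos a) v) = C n (pos a) (pos a) v - (-1) ^+ par k *: C n k k v.
  move=> hk ak; rewrite Cop_rho_swap ?(Cop_hw n ha hk) // (qbracket_outer _ _ _ _ hk).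
  rewrite eqxx eq_pos_neg ssign_outer_pos addr0 scalerBr scalerA -expr2 sqrr_sign.
  by rewrite scale1r opprB.
have diag : rho (neg a) (pos a) (C n (pos a) (neg a) v) =
    - C n (pos a) (neg a) (rho (neg a) (pos a) v)
    + ((-1) ^+ n + 1) *: C n (pos a) (pos a) v.
  rewrite (Cop_bracket n v hna ha ha hna) (qbracket_outer _ _ _ _ hna).
  rewrite eqxx eq_pos_neg ssign_outer_pos par_neg expr1 !scaleN1r opprK addr0.
  by rewrite Cop_opp // scalerDl scale1r.
rewrite Cop_right big_idxI_pair (big_ord_from (a := a)) => [|b ba]; last first.
  rewrite !v_hw ?mem_idxI_pos ?mem_idxI_neg ?abszN //= ?ltnS //.
  by rewrite !scaler0 !(linop0 (lC _ _)) addr0.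
rewrite (eq_bigr (fun b => - ((1 + (-1) ^+ n) *: C n (pos b) (pos b) v))); last first.
  move=> b ab; rewrite !par_pos !par_neg expr0 expr1 !scale1r scaleN1r.
  rewrite (linopN (lC _ _)) !swap ?mem_idxI_pos ?mem_idxI_neg ?abszN ?ltnS //.
  rewrite par_pos par_neg expr0 expr1 !scaleN1r scale1r Cop_opp ?mem_idxI_pos //.
  by rewrite opprK opprD addrACA subrr add0r scalerDl scale1r opprD.
rewrite par_pos par_neg expr0 expr1 scale1r scaleN1r v_wt (linopZ (lC _ _)).
rewrite (linopN (lC _ _)) diag sumrN -scaler_sumr.
by rewrite [_ + 1]addrC scalerDr opprD !addrA addrK.
Qed.

Lemma Cop_anti_step n (a : 'I_N) :
  C n.+1 (pos a) (neg a) v =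
    rho (pos a) (neg a) (C n (pos a) (pos a) v) - lam a *: C n (pos a) (neg a) v
    + (1 - (-1) ^+ n) *: (C n (pos a) (neg a) v
                         + \sum_(b < N | (a < b)%N) C n (pos b) (neg b) v).
Proof.
have ha : pos a \in I by rewrite mem_idxI_pos.
have hna : neg a \in I by rewrite mem_idxI_neg.
have lC i j := Cop_linear n i j.
have swap k : k \in I -> (a.+1 < absz k)%N ->
    C n (pos a) k (rho k (neg a) v) = C n (pos a) (neg a) v - (-1) ^+ n *: C n k (- k) v.
  move=> hk ak; rewrite Cop_rho_swap ?(Cop_hw n ha hk) // (qbracket_outer _ _ _ _ hk).
  rewrite eq_pos_neg opprK eqxx ssign_outer_neg !scale1r Cop_opp_swap //.
  by rewrite sub0r opprD opprK addrC.
have diag : C n (pos a) (pos a) (rho (pos a) (neg a) v) =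
    rho (pos a) (neg a) (C n (pos a) (pos a) v)
    + C n (pos a) (neg a) v - (-1) ^+ n *: C n (pos a) (neg a) v.
  rewrite (Cop_bracket n v ha hna ha ha) (qbracket_outer _ _ _ _ ha).
  rewrite eq_pos_neg opprK eqxx ssign_outer_neg !scale1r Cop_opp_swap // sub0r.
  by rewrite -!addrA [_ ^+ n *: _ + _]addrCA subrr addr0 addNr addr0.
rewrite Cop_right big_idxI_pair (big_ord_from (a := a)) => [|b ba]; last first.
  rewrite !v_hw ?mem_idxI_pos ?mem_idxI_neg ?abszN //= ?ltnS //.
  by rewrite !scaler0 !(linop0 (lC _ _)) addr0.
rewrite (eq_bigr (fun b => (1 - (-1) ^+ n) *: C n (pos b) (neg b) v)); last first.
  move=> b ab; rewrite !par_pos !par_neg expr0 expr1 scale1r scaleN1r.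
  rewrite (linopN (lC _ _)) !swap ?mem_idxI_pos ?mem_idxI_neg ?abszN ?ltnS //.
  rewrite opprK Cop_opp_swap ?mem_idxI_pos // scalerA -expr2 sqrr_sign scale1r.
  by rewrite opprB addrC addrA subrK scalerBl scale1r.
rewrite par_pos par_neg expr0 expr1 scale1r scaleN1r (rho_opp ha ha) v_wt.
rewrite (linopN (lC _ _)) (linopZ (lC _ _)) diag -scaler_sumr.
rewrite scalerDr [RHS]addrA; congr (_ + _).
by rewrite addrAC [_ + C n _ _ v - _]addrAC scalerBl scale1r addrA.
Qed.

Lemma Cop_step_from_even n (c : 'I_N -> algC) : ~~ odd n ->
  (forall a : 'I_N, C n (pos a) (pos a) v = (lam a * c a) *: v
                 /\ C n (pos a) (neg a) v = c a *: rho (pos a) (neg a) v) ->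
  forall a : 'I_N,
    C n.+1 (pos a) (pos a) v
      = (lam a * (lam a - 1) * c a - 2 * \sum_(b < N | (a < b)%N) lam b * c b) *: v
    /\ C n.+1 (pos a) (neg a) v = 0.
Proof.
move=> n_even H a; have sign_n : (-1) ^+ n = 1 :> algC by rewrite -signr_odd (negbTE n_even).
have [Ha Ha'] := H a.
rewrite Cop_diag_step Cop_anti_step sign_n subrr scale0r addr0 Ha Ha'.
rewrite !(linopZ (rho_linear (pos a) (neg a))) (linopZ (rho_linear (neg a) (pos a))).
rewrite rho_neg_pos; split; last by rewrite scalerA subrr.
under eq_bigr => b _ do rewrite (proj1 (H b)).
rewrite -scaler_suml -!scalerDl !scalerA -!scalerDl -scalerBl; congr (_ *: _).
by ring.
Qed.

Lemma Cop_step_from_odd n (c : 'I_N -> algC) : odd n ->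
  (forall a : 'I_N, C n (pos a) (pos a) v = c a *: v /\ C n (pos a) (neg a) v = 0) ->
  forall a : 'I_N, C n.+1 (pos a) (pos a) v = (lam a * c a) *: v
                /\ C n.+1 (pos a) (neg a) v = c a *: rho (pos a) (neg a) v.
Proof.
move=> n_odd H a; have sign_n : (-1) ^+ n = -1 :> algC by rewrite -signr_odd n_odd.
have [Ha Ha'] := H a.
rewrite Cop_diag_step Cop_anti_step sign_n addrN scale0r subr0 Ha Ha'.
rewrite (linop0 (rho_linear _ _)) (linopZ (rho_linear _ _)) scaler0 !addr0 subr0 scalerA.
split=> //; rewrite big1 ?addr0 ?scaler0 ?addr0 // => b _.
exact: (proj2 (H b)).
Qed.

Lemma Cop_even_level m (a : 'I_N) :
  C (2 * m) (pos a) (pos a) v = (lam a * hwcoef lam m a) *: v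
  /\ C (2 * m) (pos a) (neg a) v = hwcoef lam m a *: rho (pos a) (neg a) v.
Proof.
elim: m a => [|m IH] a; first by rewrite /= v_wt mulr1 scale1r.
have even_2m : ~~ odd (2 * m) by rewrite mul2n odd_double.
rewrite mulnS; apply: (Cop_step_from_odd (n := (2 * m).+1)) => [|b].
  by rewrite /= even_2m.
exact: (Cop_step_from_even even_2m IH).
Qed.

End HighestWeightVector.

End Representation.

Unset Implicit Arguments.

Theorem mainTheorem10 (N : nat) (V : lmodType algC) (rho : int -> int -> V -> V)
  (lam : 'I_N -> algC) (v : V) :
  is_qN_rep N rho ->
  (forall i j, i \in idxI N -> j \in idxI N -> (absz i < absz j)%N -> rho i j v = 0) ->
  (forall i : 'I_N, rho (Posz i.+1) (Posz i.+1) v = lam i *: v) ->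
  forall (m : nat) (i : 'I_N),
    Cact N rho (2 * m + 1)%N (Posz i.+1) (Posz i.+1) v
    = (\sum_(j < N) ((Amx lam) ^+ m) i j * lam j) *: v.
Proof.
move=> rep v_hw v_wt m i.
rewrite addn1 sum_Amx_exp.
by case: (Cop_even_level rep v_hw v_wt m i).
Qed.
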